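(* Let $k\in\mathbb{Z}$. For every integer $n\ge 1$, $$\frac{2}{n}\sum_{m=1}^{n}\frac{1}{m^{k-1}}S_{1}(n,m)=E_{n-1}^{(k)}(1)+E_{n-1}^{(k)}.$$
   Context: For $k\in\mathbb{Z}$, $\mathrm{Ei}_k(x)=\sum_{n=1}^{\infty}\frac{x^n}{n^k(n-1)!}$. The poly-Genocchi polynomials $G_n^{(k)}(x)$ are defined by $\frac{2\,\mathrm{Ei}_k(\log(1+t))}{e^t+1}e^{xt}=\sum_{n=0}^{\infty}G_n^{(k)}(x)\frac{t^n}{n!}$. The poly-Euler polynomials of index $k$ are $E_n^{(k)}(x)=\frac{G_{n+1}^{(k)}(x)}{n+1}$ for $n\ge0$, and $E_n^{(k)}=E_n^{(k)}(0)$. $S_1(n,m)$ denotes the signed Stirling numbers of the first kind: $\frac{(\log(1+t))^m}{m!}=\sum_{n=m}^{\infty}S_1(n,m)\frac{t^n}{n!}$. *)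

From mathcomp Require Import all_boot all_order all_algebra.
Set Implicit Arguments. Unset Strict Implicit. Unset Printing Implicit Defensive.
Import Order.TTheory GRing.Theory Num.Theory.
Local Open Scope ring_scope.

Section FPS.
Variable R : numFieldType.

Definition fps := nat -> R.

Definition fps_mul (a b : fps) : fps :=
  fun n => \sum_(i < n.+1) a i * b (n - i)%N.

Definition fps_one : fps := fun n => if n == 0%N then 1 else 0.

Fixpoint fps_pow (a : fps) (m : nat) : fps :=
  match m with 0%N => fps_one | m'.+1 => fps_mul a (fps_pow a m') end.

(* multiplicative inverse of a series with a 0 <> 0:
   b_0 = 1/a_0, b_n = -(1/a_0) sum_{j=1}^n a_j b_{n-j} *)
Fixpoint fps_inv_aux (a : fps) (n : nat) : seq R :=
  match n with
  | 0%N => [:: (a 0%N)^-1]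
  | n'.+1 => let s := fps_inv_aux a n' in
      rcons s (- (a 0%N)^-1 * \sum_(i < n'.+1) a i.+1 * nth 0 s (n' - i)%N)
  end.
Definition fps_inv (a : fps) : fps := fun n => nth 0 (fps_inv_aux a n) n.

Definition fps_expx (x : R) : fps := fun n => x ^+ n / (n`!)%:R.

Definition fps_exp1p1 : fps := fun n => (n`!)%:R^-1 + (if n == 0%N then 1 else 0).

Definition fps_log1p : fps :=
  fun n => if n == 0%N then 0 else (-1) ^+ n.-1 / n%:R.

(* Ei_k(log(1+t)) = sum_{m>=1} (log(1+t))^m / (m^k (m-1)!) ;
   the coefficient of t^n only involves m <= n since log(1+t) has no constant term *)
Definition fps_Ei_log1p (k : int) : fps :=
  fun n => \sum_(1 <= m < n.+1)
             ((m%:R : R) ^ k)^-1 / ((m.-1)`!)%:R * fps_pow fps_log1p m n.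

(* Poly-Genocchi polynomials:
   2 Ei_k(log(1+t)) e^{xt} / (e^t+1) = sum_n G_n^{(k)}(x) t^n / n! *)
Definition polyGenocchi (n : nat) (k : int) (x : R) : R :=
  (n`!)%:R *
    fps_mul (fps_mul (fun j => 2 * fps_Ei_log1p k j) (fps_expx x))
            (fps_inv fps_exp1p1) n.

Definition polyEuler (n : nat) (k : int) (x : R) : R :=
  polyGenocchi n.+1 k x / (n.+1)%:R.

Definition stirling1 (n m : nat) : R :=
  (n`!)%:R * (fps_pow fps_log1p m n / (m`!)%:R).

End FPS.

(* Write [Ei] for Ei_k(log(1+t)).  By definition G_n(x+1) + G_n(x) is n! times
   the t^n-coefficient of 2 Ei e^{(x+1)t}/(e^t+1) + 2 Ei e^{xt}/(e^t+1)
   = 2 Ei e^{xt} (e^t+1)/(e^t+1) = 2 Ei e^{xt}, so at x = 0 the right-hand side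
   is (2/n) n! [t^n] Ei.  Expanding Ei = sum_m (log(1+t))^m / (m^k (m-1)!)
   and (log(1+t))^m / m! = sum_n S_1(n,m) t^n/n! termwise gives the left-hand
   side.  The ring laws for formal power series needed on the way are read
   off from polynomial multiplication, since the coefficients of degree <= N
   of a Cauchy product only depend on the truncations at degree N. *)

From mathcomp Require Import all_boot all_order all_algebra.
From Stdlib Require Import FunctionalExtensionality.
From mathcomp Require Import ring.
Set Implicit Arguments.
Unset Strict Implicit.
Unset Printing Implicit Defensive.
Import Order.TTheory GRing.Theory Num.Theory.
Local Open Scope ring_scope.

Section PolyTruncation.
Variable R : nzSemiRingType.
Implicit Types p q : {poly R}.

Lemma coefM_take_polyl p q n : (take_poly n.+1 p * q)`_n = (p * q)`_n.
Proof.
rewrite -{2}(poly_take_drop n.+1 p) mulrDl coefD -mulrA [in X in _ + X]coefM.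
rewrite big1 ?addr0 // => i _.
by rewrite coefXnM ltnS (leq_trans (leq_subr _ _)) ?leq_ord ?mul0r ?mulr0.
Qed.

Lemma coefM_take_polyr p q n : (p * take_poly n.+1 q)`_n = (p * q)`_n.
Proof.
rewrite -{2}(poly_take_drop n.+1 q) mulrDr coefD mulrA coefMXn ltnS leqnn.
by rewrite addr0.
Qed.

End PolyTruncation.

Section FpsRing.
Variable R : numFieldType.
Implicit Types (a b c : fps R) (x y : R).

Definition fps_add a b : fps R := fun n => a n + b n.

Definition fps_scale x a : fps R := fun n => x * a n.

Definition fps_poly (N : nat) a : {poly R} := \poly_(i < N.+1) a i.

Lemma coef_fps_poly_mul N a b n :
  (n <= N)%N -> (fps_poly N a * fps_poly N b)`_n = fps_mul a b n.
Proof.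
move=> leqnN; rewrite coefM; apply: eq_bigr => i _.
rewrite !coef_poly !ltnS (leq_trans _ leqnN) ?leq_ord //.
by rewrite (leq_trans (leq_subr _ _) leqnN).
Qed.

Lemma fps_poly_mul N a b :
  fps_poly N (fps_mul a b) = take_poly N.+1 (fps_poly N a * fps_poly N b).
Proof.
apply/polyP => n; rewrite coef_take_poly coef_poly.
by case: ltnP => // ltnN; rewrite coef_fps_poly_mul.
Qed.

Lemma fps_mulC a b : fps_mul a b = fps_mul b a.
Proof.
apply: functional_extensionality => n.
by rewrite -!(coef_fps_poly_mul _ _ (leqnn n)) mulrC.
Qed.

Lemma fps_mulA a b c : fps_mul (fps_mul a b) c = fps_mul a (fps_mul b c).
Proof.
apply: functional_extensionality => n.
rewrite -!(coef_fps_poly_mul _ _ (leqnn n)).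
by rewrite !fps_poly_mul coefM_take_polyl coefM_take_polyr mulrA.
Qed.

Lemma fps_mulDl a b c :
  fps_mul (fps_add a b) c = fps_add (fps_mul a c) (fps_mul b c).
Proof.
apply: functional_extensionality => n.
by rewrite /fps_mul /fps_add -big_split; apply: eq_bigr => i _; rewrite mulrDl.
Qed.

Lemma fps_mulDr a b c :
  fps_mul a (fps_add b c) = fps_add (fps_mul a b) (fps_mul a c).
Proof. by rewrite fps_mulC fps_mulDl !(fps_mulC a). Qed.

Lemma fps_mul1r a : fps_mul (fps_one R) a = a.
Proof.
apply: functional_extensionality => n.
rewrite /fps_mul big_ord_recl /fps_one eqxx mul1r subn0 big1 ?addr0 // => i _.
by rewrite mul0r.
Qed.

Lemma fps_mulr1 a : fps_mul a (fps_one R) = a.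
Proof. by rewrite fps_mulC fps_mul1r. Qed.

Lemma fps_mulZl x a b : fps_mul (fps_scale x a) b = fps_scale x (fps_mul a b).
Proof.
apply: functional_extensionality => n.
by rewrite /fps_mul /fps_scale mulr_sumr; apply: eq_bigr => i _; rewrite mulrA.
Qed.

Lemma size_fps_inv_aux a n : size (fps_inv_aux a n) = n.+1.
Proof. by elim: n => [|n IHn] //=; rewrite size_rcons IHn. Qed.

Lemma nth_fps_inv_aux a n i :
  (i <= n)%N -> nth 0 (fps_inv_aux a n) i = fps_inv a i.
Proof.
elim: n => [|n IHn]; first by rewrite leqn0 => /eqP ->.
rewrite leq_eqVlt => /predU1P[-> //|ltin].
by rewrite /= nth_rcons size_fps_inv_aux ltin IHn.
Qed.

Lemma fps_invS a n :
  fps_inv a n.+1 = - (a 0%N)^-1 * \sum_(i < n.+1) a i.+1 * fps_inv a (n - i)%N.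
Proof.
rewrite /fps_inv /= nth_rcons size_fps_inv_aux ltnn eqxx; congr (_ * _).
by apply: eq_bigr => i _; rewrite nth_fps_inv_aux // leq_subr.
Qed.

Lemma fps_mulV a : a 0%N != 0 -> fps_mul a (fps_inv a) = fps_one R.
Proof.
move=> a0_neq0; apply: functional_extensionality => -[|n].
  by rewrite /fps_mul big_ord1 /fps_inv /= mulfV.
rewrite /fps_mul big_ord_recl subn0 fps_invS mulrA mulrN mulfV // mulN1r.
rewrite /fps_one.
rewrite addrC; apply/eqP; rewrite subr_eq0; apply/eqP/eq_bigr => i _.
by rewrite lift0 subSS.
Qed.

Lemma fps_expx0 : fps_expx 0 = fps_one R.
Proof.
apply: functional_extensionality => -[|n]; rewrite /fps_expx /fps_one /=.
  by rewrite expr0 fact0 divr1.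
by rewrite expr0n mul0r.
Qed.

Lemma fps_expxD x y : fps_mul (fps_expx x) (fps_expx y) = fps_expx (x + y).
Proof.
apply: functional_extensionality => n.
rewrite /fps_mul /fps_expx addrC exprDn mulr_suml; apply: eq_bigr => -[i] /=.
rewrite ltnS => leqin _; rewrite -(mulr_natr _ 'C(n, i)) -(bin_fact leqin) !natrM.
have fact_neq0 m : (m`!%:R : R) != 0 by rewrite pnatr_eq0 -lt0n fact_gt0.
have bin_neq0 : ('C(n, i)%:R : R) != 0 by rewrite pnatr_eq0 -lt0n bin_gt0.
by field; rewrite !fact_neq0 bin_neq0.
Qed.

Lemma fps_exp1p1E : fps_exp1p1 R = fps_add (fps_expx 1) (fps_one R).
Proof.
apply: functional_extensionality => n.
by rewrite /fps_exp1p1 /fps_add /fps_expx /fps_one expr1n div1r.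
Qed.

End FpsRing.

Lemma polyGenocchiD1 (R : numFieldType) n k (x : R) :
  polyGenocchi n k (x + 1) + polyGenocchi n k x
  = 2 * n`!%:R * fps_mul (fps_Ei_log1p R k) (fps_expx x) n.
Proof.
set A := fps_scale 2 (fps_Ei_log1p R k); set I := fps_inv (fps_exp1p1 R).
have exp1p1_0_neq0 : fps_exp1p1 R 0 != 0.
  by rewrite /fps_exp1p1 fact0 invr1 gt_eqF // addr_gt0 ?ltr01.
have sumE : fps_add (fps_mul (fps_mul A (fps_expx (x + 1))) I)
                    (fps_mul (fps_mul A (fps_expx x)) I)
            = fps_mul A (fps_expx x).
  rewrite -fps_mulDl -fps_mulDr -fps_expxD -{2}(fps_mulr1 (fps_expx x)).
  by rewrite -fps_mulDr -fps_exp1p1E !fps_mulA fps_mulV // fps_mulr1.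
have /= := congr1 (fun f => f n) sumE; rewrite /fps_add => sum_coef.
by rewrite /polyGenocchi -mulrDr sum_coef fps_mulZl /fps_scale mulrCA mulrA.
Qed.

Lemma sum_stirling1_Ei_log1p (R : numFieldType) (k : int) n :
  \sum_(1 <= m < n.+1) ((m%:R : R) ^ (k - 1))^-1 * stirling1 R n m
  = n`!%:R * fps_Ei_log1p R k n.
Proof.
rewrite /fps_Ei_log1p mulr_sumr; apply: eq_big_nat => m /andP[m_gt0 _].
have m_neq0 : (m%:R : R) != 0 by rewrite pnatr_eq0 -lt0n.
have exprz_neq0 : (m%:R : R) ^ (k - 1) != 0 by rewrite expfz_neq0.
have fact_neq0 : ((m.-1)`!%:R : R) != 0 by rewrite pnatr_eq0 -lt0n fact_gt0.
rewrite /stirling1 -[in m`!](prednK m_gt0) factS prednK // natrM.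
rewrite -{2}(subrK 1 k) (expfzDr (k - 1) 1 m_neq0) expr1z.
by field; rewrite fact_neq0 m_neq0 exprz_neq0.
Qed.

Theorem corollary2 (R : numFieldType) (k : int) (n : nat) (hn : (1 <= n)%N) :
  2 / (n%:R : R) * \sum_(1 <= m < n.+1) ((m%:R : R) ^ (k - 1))^-1 * stirling1 R n m
  = polyEuler n.-1 k 1 + polyEuler n.-1 k 0.
Proof.
have := polyGenocchiD1 n k (0 : R).
rewrite add0r fps_expx0 fps_mulr1 => genocchi_sum.
have n_neq0 : (n%:R : R) != 0 by rewrite pnatr_eq0 -lt0n.
rewrite sum_stirling1_Ei_log1p /polyEuler prednK // -mulrDl genocchi_sum.
by field.
Qed.
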